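(* Let $E$ be a real vector space, $M$ a linear subspace of $E$, $S$ a sublinear functional on $E$ and $P$ a superlinear functional on $E$. Let $x_0\in E\setminus M$ and let $M_1$ be the smallest linear subspace of $E$ containing $M$ and $x_0$. Let $f_0$ be a linear functional on $M$ such that $f_0(x)\le S(x+y)-P(y)$ for every $x\in M$ and every $y\in M_1$. Then there exists a linear functional $L$ on $M_1$ such that $L(x)=f_0(x)$ for all $x\in M$ and $P(x)\le L(x)\le S(x)$ for every $x\in M_1$.
   Context: A functional $S:E\to\mathbb{R}$ is sublinear if $S(x+y)\le S(x)+S(y)$ for all $x,y\in E$ and $S(\alpha x)=\alpha S(x)$ for all $x\in E$, $\alpha>0$. A functional $P:E\to\mathbb{R}$ is superlinear if $P(x+y)\ge P(x)+P(y)$ and $P(\alpha x)=\alpha P(x)$ for all $x,y\in E$, $\alpha>0$. *)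

From mathcomp Require Import all_boot all_order all_algebra.
From mathcomp Require Import reals.
Set Implicit Arguments. Unset Strict Implicit. Unset Printing Implicit Defensive.
Import Order.TTheory GRing.Theory Num.Theory.
Local Open Scope ring_scope.

Section Defs.
Variables (R : realType) (E : lmodType R).

Definition subspace (N : E -> Prop) : Prop :=
  N 0 /\ forall (a : R) (x y : E), N x -> N y -> N (a *: x + y).

Definition span_with (M : E -> Prop) (x0 : E) : E -> Prop :=
  fun x => forall N : E -> Prop, subspace N -> (forall m, M m -> N m) -> N x0 -> N x.

(* f is a linear functional on the subspace N (values outside N irrelevant). *)
Definition linear_on (N : E -> Prop) (f : E -> R) : Prop :=
  forall (a : R) (x y : E), N x -> N y -> f (a *: x + y) = a * f x + f y.

Definition sublinear (S : E -> R) : Prop :=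
  (forall x y, S (x + y) <= S x + S y) /\
  (forall (a : R) x, 0 < a -> S (a *: x) = a * S x).

Definition superlinear (P : E -> R) : Prop :=
  (forall x y, P (x + y) >= P x + P y) /\
  (forall (a : R) x, 0 < a -> P (a *: x) = a * P x).
End Defs.

From mathcomp Require Import all_boot all_order all_algebra.
From mathcomp Require Import reals.
From mathcomp Require Import boolp classical_sets.
From mathcomp Require Import ring lra.
Set Implicit Arguments. Unset Strict Implicit. Unset Printing Implicit Defensive.
Import Order.TTheory GRing.Theory Num.Theory.
Local Open Scope ring_scope.
Local Open Scope classical_set_scope.

(* The extension is L (m + t x0) = f0 m + t c for a constant c. By positive
   homogeneity of P, L and S, the bounds P <= L <= S on M1 only have to be
   checked at the points m, m + x0 and m - x0 (m in M), which amounts to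
   asking that c lie above every P (m + x0) - f0 m and f0 m - S (m - x0) and
   below every S (m + x0) - f0 m and f0 m - P (m - x0). The compatibility
   hypothesis, together with the sub/superadditivity of S and P, says that
   each of these lower bounds is below each upper bound, so the supremum of
   the lower bounds is a valid c. *)

Lemma sup_between (R : realType) (A B : set R) :
  A !=set0 -> B !=set0 -> (forall a b, A a -> B b -> a <= b) ->
  ubound A (sup A) /\ lbound B (sup A).
Proof.
move=> A0 [b Bb] AleB; split.
  by apply: sup_upper_bound; split => //; exists b => a Aa; exact: AleB.
by move=> b' Bb'; apply: ge_sup => // a Aa; exact: AleB.
Qed.

Section Subspace.
Variables (R : realType) (E : lmodType R) (N : E -> Prop).
Hypothesis subN : subspace N.

Lemma subspaceZ a x : N x -> N (a *: x).
Proof. by case: subN => N0 NC Nx; have := NC a x 0 Nx N0; rewrite addr0. Qed.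

Lemma subspaceD x y : N x -> N y -> N (x + y).
Proof. by case: subN => _ NC Nx Ny; have := NC 1 x y Nx Ny; rewrite scale1r. Qed.

Lemma subspaceB x y : N x -> N y -> N (x - y).
Proof. by move=> Nx Ny; rewrite -scaleN1r; apply: subspaceD => //; apply: subspaceZ. Qed.

Variable f : E -> R.
Hypothesis linf : linear_on N f.

Lemma linear_on0 : f 0 = 0.
Proof.
case: subN => N0 _; have := linf 1 N0 N0.
by rewrite scale1r addr0 mul1r => e; lra.
Qed.

Lemma linear_onZ a x : N x -> f (a *: x) = a * f x.
Proof.
by case: subN => N0 _ Nx; have := linf a Nx N0; rewrite !addr0 linear_on0 addr0.
Qed.

Lemma linear_onD x y : N x -> N y -> f (x + y) = f x + f y.
Proof. by move=> Nx Ny; have := linf 1 Nx Ny; rewrite scale1r mul1r. Qed.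

Lemma linear_onB x y : N x -> N y -> f (x - y) = f x - f y.
Proof.
move=> Nx Ny; rewrite -scaleN1r linear_onD ?linear_onZ ?mulN1r //.
exact: subspaceZ.
Qed.

End Subspace.

Section SublinearSuperlinear.
Variables (R : realType) (E : lmodType R).

Lemma sublinear0 (S : E -> R) : sublinear S -> S 0 = 0.
Proof. by case=> _ Shom; have := Shom 2 0 (ltr0Sn _ 1); rewrite scaler0 => e; lra. Qed.

Lemma superlinear0 (P : E -> R) : superlinear P -> P 0 = 0.
Proof. by case=> _ Phom; have := Phom 2 0 (ltr0Sn _ 1); rewrite scaler0 => e; lra. Qed.

Lemma between_pscale (S P : E -> R) a w l :
  sublinear S -> superlinear P -> 0 < a ->
  P w <= l <= S w -> P (a *: w) <= a * l <= S (a *: w).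
Proof.
by move=> [_ Shom] [_ Phom] a0; rewrite Shom // Phom // !ler_pM2l.
Qed.

End SublinearSuperlinear.

Section Span.
Variables (R : realType) (E : lmodType R) (M : E -> Prop) (x0 : E).

Lemma subspace_span_with : subspace (span_with M x0).
Proof.
split; first by move=> N [N0 _].
move=> a x y Sx Sy N subN MN Nx0; case: (subN) => _ NC.
by apply: NC; [apply: Sx|apply: Sy].
Qed.

Hypothesis subM : subspace M.

Lemma span_withP z :
  span_with M x0 z <-> exists m t, M m /\ z = m + t *: x0.
Proof.
split=> [Sz|[m [t [Mm ->]]] N [_ NC] MN Nx0]; last first.
  by rewrite addrC; apply: NC => //; exact: MN.
apply: (Sz (fun z => exists m t, M m /\ z = m + t *: x0)).
- split; first by exists 0, 0; rewrite scale0r addr0; case: subM.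
  move=> a _ _ [m1 [t1 [M1 ->]]] [m2 [t2 [M2 ->]]].
  exists (a *: m1 + m2), (a * t1 + t2); split; first by case: subM => _; apply.
  by rewrite scalerDr scalerDl scalerA addrACA.
- by move=> m Mm; exists m, 0; rewrite scale0r addr0.
- by exists 0, 1; rewrite add0r scale1r; split => //; case: subM.
Qed.

Lemma span_with_cone z : span_with M x0 z ->
  M z \/ exists a m, [/\ 0 < a, M m & z = a *: (m + x0) \/ z = a *: (m - x0)].
Proof.
move=> /span_withP [m [t [Mm ->]]].
have rescale a : 0 < a -> m = a *: (a^-1 *: m).
  by move=> a0; rewrite scalerA mulfV ?gt_eqF ?scale1r.
case: (ltrgtP t 0) => [tn|tp|->]; last by left; rewrite scale0r addr0.
- right; exists (- t), ((- t)^-1 *: m); split; rewrite ?oppr_gt0 //.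
    exact: subspaceZ.
  by right; rewrite scalerBr -rescale ?oppr_gt0 // scaleNr opprK.
- right; exists t, (t^-1 *: m); split => //; first exact: subspaceZ.
  by left; rewrite scalerDr -rescale.
Qed.

Lemma span_with_shift m t : M m -> span_with M x0 (m + t *: x0).
Proof. by move=> Mm; apply/span_withP; exists m, t. Qed.

Lemma span_with_addx0 m : M m -> span_with M x0 (m + x0).
Proof. by move=> Mm; have := span_with_shift 1 Mm; rewrite scale1r. Qed.

Lemma span_with_subx0 m : M m -> span_with M x0 (m - x0).
Proof. by move=> Mm; have := span_with_shift (-1) Mm; rewrite scaleN1r. Qed.

Hypothesis Mx0 : ~ M x0.

Lemma span_with_coord_uniq m t m' t' : M m -> M m' ->
  m + t *: x0 = m' + t' *: x0 -> m = m' /\ t = t'.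
Proof.
move=> Mm Mm'; have [<- e|neq_tt' e] := eqVneq t t'.
  by split => //; apply: addIr e.
exfalso; apply: Mx0.
have e' : m' - m = (t - t') *: x0.
  by rewrite -[m'](addrK (t' *: x0)) -e scalerBl addrAC [m + _]addrC addrK.
have -> : x0 = (t - t')^-1 *: (m' - m).
  by rewrite e' scalerA mulVf ?scale1r // subr_eq0.
by apply: (subspaceZ subM); exact: (subspaceB subM).
Qed.

Variable f0 : E -> R.
Hypothesis linf0 : linear_on M f0.

Definition extend_with (c : R) (z : E) : R :=
  if pselect (exists p : E * R, M p.1 /\ z = p.1 + p.2 *: x0) is left h
  then let p := projT1 (cid h) in f0 p.1 + p.2 * c else 0.

Lemma extend_withE c m t : M m -> extend_with c (m + t *: x0) = f0 m + t * c.
Proof.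
move=> Mm; rewrite /extend_with; case: pselect => [h|[]]; last by exists (m, t).
case: (cid h) => [[m1 t1] /= [M1 e]].
by have [-> ->] := span_with_coord_uniq Mm M1 e.
Qed.

Lemma extend_with_linear c : linear_on (span_with M x0) (extend_with c).
Proof.
move=> a _ _ /span_withP [m1 [t1 [M1 ->]]] /span_withP [m2 [t2 [M2 ->]]].
have ->: a *: (m1 + t1 *: x0) + (m2 + t2 *: x0) = (a *: m1 + m2) + (a * t1 + t2) *: x0.
  by rewrite scalerDr scalerDl scalerA addrACA.
rewrite !extend_withE //; last by case: subM => _; apply.
by rewrite linf0 //; ring.
Qed.

Lemma extend_with_on c m : M m -> extend_with c m = f0 m.
Proof. by move=> Mm; have := extend_withE c 0 Mm; rewrite scale0r !addr0 mul0r addr0. Qed.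

Lemma extend_with_plus c m : M m -> extend_with c (m + x0) = f0 m + c.
Proof. by move=> Mm; have := extend_withE c 1 Mm; rewrite scale1r mul1r. Qed.

Lemma extend_with_minus c m : M m -> extend_with c (m - x0) = f0 m - c.
Proof. by move=> Mm; have := extend_withE c (-1) Mm; rewrite scaleN1r mulN1r. Qed.

End Span.

Arguments subspace_span_with {R E M x0}.

Section Sandwich.
Variables (R : realType) (E : lmodType R) (M : E -> Prop) (x0 : E) (S P : E -> R).
Hypotheses (subM : subspace M) (subS : sublinear S) (supP : superlinear P).

Lemma between_on_span_with L : linear_on (span_with M x0) L ->
  (forall m, M m -> P m <= L m <= S m) ->
  (forall m, M m -> P (m + x0) <= L (m + x0) <= S (m + x0)) ->
  (forall m, M m -> P (m - x0) <= L (m - x0) <= S (m - x0)) ->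
  forall z, span_with M x0 z -> P z <= L z <= S z.
Proof.
move=> linL onM plus minus z /(span_with_cone subM) [/onM //|[a [m [a0 Mm [->|->]]]]].
- rewrite (linear_onZ subspace_span_with linL); last exact: span_with_addx0.
  exact: between_pscale (plus m Mm).
- rewrite (linear_onZ subspace_span_with linL); last exact: span_with_subx0.
  exact: between_pscale (minus m Mm).
Qed.

Variable f0 : E -> R.
Hypotheses (linf0 : linear_on M f0)
  (compat : forall x y, M x -> span_with M x0 y -> f0 x <= S (x + y) - P y).

Lemma compat_between_on m : M m -> P m <= f0 m <= S m.
Proof.
move=> Mm; have M0 : M 0 by case: subM.
have := compat (subspaceB subM M0 Mm) (span_with_shift (x0 := x0) subM 0 Mm).
rewrite scale0r addr0 subrK (sublinear0 subS) (linear_onB subM linf0) //.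
rewrite (linear_on0 subM linf0) => lower.
have := compat Mm (span_with_shift (x0 := x0) subM 0 M0).
rewrite scale0r !addr0 (superlinear0 supP) => upper.
apply/andP; split; lra.
Qed.

Let lower := [set P (m + x0) - f0 m | m in M] `|` [set f0 m - S (m - x0) | m in M].
Let upper := [set S (m + x0) - f0 m | m in M] `|` [set f0 m - P (m - x0) | m in M].

Lemma lower_le_upper a b : lower a -> upper b -> a <= b.
Proof.
have [Sadd _] := subS; have [Padd _] := supP.
have fB := linear_onB subM linf0; have fD := linear_onD linf0.
move=> [[m Mm <-]|[m Mm <-]] [[m' Mm' <-]|[m' Mm' <-]].
- have := compat (subspaceB subM Mm' Mm) (span_with_addx0 (x0 := x0) subM Mm).
  by rewrite addrA subrK fB // => h; lra.
- have := Padd (m + x0) (m' - x0); rewrite addrACA subrr addr0 => h.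
  have := compat_between_on (subspaceD subM Mm Mm'); rewrite fD // => /andP[h' _].
  lra.
- have := Sadd (m - x0) (m' + x0); rewrite addrACA addNr addr0 => h.
  have := compat_between_on (subspaceD subM Mm Mm'); rewrite fD // => /andP[_ h'].
  lra.
- have := compat (subspaceB subM Mm Mm') (span_with_subx0 (x0 := x0) subM Mm').
  by rewrite addrA subrK fB // => h; lra.
Qed.

Hypothesis Mx0 : ~ M x0.

Lemma exists_sandwiched_extension : exists c,
  forall z, span_with M x0 z -> P z <= extend_with M x0 f0 c z <= S z.
Proof.
have M0 : M 0 by case: subM.
have [lower_c c_upper] : ubound lower (sup lower) /\ lbound upper (sup lower).
  by apply: sup_between => [||a b]; [exists (P (0 + x0) - f0 0)|
    exists (S (0 + x0) - f0 0)|exact: lower_le_upper]; left; exists 0.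
exists (sup lower); apply: between_on_span_with => [|m Mm|m Mm|m Mm].
- exact: extend_with_linear.
- by rewrite extend_with_on //; exact: compat_between_on.
- rewrite extend_with_plus //.
  have := lower_c _ (or_introl (ex_intro2 _ _ m Mm erefl)).
  have := c_upper _ (or_introl (ex_intro2 _ _ m Mm erefl)).
  by move=> h h'; apply/andP; split; lra.
- rewrite extend_with_minus //.
  have := lower_c _ (or_intror (ex_intro2 _ _ m Mm erefl)).
  have := c_upper _ (or_intror (ex_intro2 _ _ m Mm erefl)).
  by move=> h h'; apply/andP; split; lra.
Qed.

End Sandwich.

Theorem lemma4p5 (R : realType) (E : lmodType R) (M : E -> Prop)
  (S P : E -> R) (x0 : E) (f0 : E -> R) :
  subspace M -> sublinear S -> superlinear P ->
  ~ M x0 ->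
  linear_on M f0 ->
  (forall x y, M x -> span_with M x0 y -> f0 x <= S (x + y) - P y) ->
  exists L : E -> R,
    linear_on (span_with M x0) L /\
    (forall x, M x -> L x = f0 x) /\
    (forall x, span_with M x0 x -> P x <= L x <= S x).
Proof.
move=> subM subS supP Mx0 linf0 compat.
have [c between] := exists_sandwiched_extension subM subS supP linf0 compat Mx0.
exists (extend_with M x0 f0 c); split; first exact: extend_with_linear.
by split=> // x; exact: extend_with_on.
Qed.
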